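(* Consider the following single-NFT sale model. A creator with cost $c\ge 0$ chooses a mint price $p_0\ge 0$ and a royalty rate $r\in[0,1]$. The end-buyer's valuation is a nonnegative random variable $V$ with finite mean $\mu=\mathbb{E}[V]$, whose distribution (but not realization) is known to both the creator and a speculator at the time of purchase. The speculator is risk neutral ($\eta_s=0$) and buys the NFT at price $p_0$ if and only if $(1-r)\mu-p_0\ge 0$; if he buys, he later resells it to the end-buyer at the realized value $V$, and the creator's profit is $p_0+rV-c$. If the speculator does not buy, the creator offers the NFT to the end-buyer at price $p_0$, who buys iff $V\ge p_0$, so the creator's profit is $p_0\mathbb{1}_{\{V\ge p_0\}}-c$. The creator is risk neutral ($\eta_c=0$) and maximizes expected profit. Then every pair $(p_0^*,r^* )$ with $r^*\in[0,1]$, $p_0^*\ge 0$ and $p_0^*=\mu(1-r^* )$ maximizes the creator's expected profit, and the maximal expected profit equals $\mu-c$. *)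

From HB Require Import structures.
From mathcomp Require Import all_boot all_order all_algebra.
From mathcomp Require Import all_classical all_reals all_analysis.
Set Implicit Arguments. Unset Strict Implicit. Unset Printing Implicit Defensive.
Import Order.TTheory GRing.Theory Num.Theory.
Local Open Scope ring_scope.

Definition speculator_buys {R : realType} (mu p0 r : R) : bool :=
  0 <= (1 - r) * mu - p0.

Definition creator_profit {d} {T : measurableType d} {R : realType}
  (V : T -> R) (mu c p0 r : R) : T -> R :=
  fun w => if speculator_buys mu p0 r then p0 + r * V w - c
           else p0 * ((p0 <= V w)%R : bool)%:R - c.

Definition expected_profit {d} {T : measurableType d} {R : realType}
  (P : probability T R) (V : T -> R) (mu c p0 r : R) : \bar R :=
  'E_P[creator_profit V mu c p0 r]%E.

From HB Require Import structures.
From mathcomp Require Import all_boot all_order all_algebra.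
From mathcomp Require Import all_classical all_reals all_analysis.
From mathcomp Require Import measurable_realfun.
From mathcomp Require Import ring lra.
Import Order.TTheory GRing.Theory Num.Theory.
Local Open Scope ring_scope.

(* If the speculator buys, the creator earns [p + r E[V] - c], and buying means
   [p + r E[V] <= E[V]].  If he does not, the creator earns [p] exactly on
   [{p <= V}], so the realized revenue is pointwise at most [V].  Either way the
   expected profit is at most [E[V] - c], with equality at [p = (1 - r) E[V]],
   where the speculator is just willing to buy. *)

Lemma measurable_bool_natr (R : realType) :
  measurable_fun setT (fun b : bool => b%:R : R).
Proof. by move=> _ Y _; rewrite setTI; exact: I. Qed.

Section expectation_facts.
Context d (T : measurableType d) (R : realType) (P : probability T R).
Local Open Scope ereal_scope.

Lemma ge0_expectation_lty_Lfun1 (X : T -> R) :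
  measurable_fun setT X -> (forall w, 0 <= X w)%R -> 'E_P[X] < +oo ->
  X \in Lfun P 1.
Proof.
move=> mX X_ge0 EX_lty; apply/Lfun1_integrable/integrableP.
split; first exact/measurable_EFinP.
under eq_integral => w _ do rewrite /= ger0_norm //.
by move: EX_lty; rewrite unlock.
Qed.

Lemma le_Lfun1 (X Y : T -> R) : measurable_fun setT X ->
  (forall w, `|X w| <= `|Y w|)%R -> Y \in Lfun P 1 -> X \in Lfun P 1.
Proof.
move=> mX XY /Lfun1_integrable Y_int; apply/Lfun1_integrable.
apply: le_integrable Y_int => //; first exact/measurable_EFinP.
by move=> w _; rewrite lee_fin.
Qed.

Lemma expectation_affine (X : T -> R) (a b : R) : X \in Lfun P 1 ->
  'E_P[fun w => a + b * X w]%R = a%:E + b%:E * 'E_P[X].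
Proof.
move=> XL; have -> : (fun w => a + b * X w)%R = (cst a \+ b \o* X)%R.
  by apply: funext => w /=; rewrite mulrC.
rewrite expectationD ?Lfun_cst ?Lfun_scale //.
by rewrite expectationZl // expectation_cst.
Qed.

End expectation_facts.

Section creator_profit.
Context d (T : measurableType d) (R : realType) (P : probability T R).
Variables (V : T -> R) (mu : R).
Hypotheses (mV : measurable_fun setT V) (V_ge0 : forall w, 0 <= V w)
  (EV : 'E_P[V]%E = mu%:E).

Let V_Lfun1 : V \in Lfun P 1.
Proof. by apply: ge0_expectation_lty_Lfun1 => //; rewrite EV ltry. Qed.

Lemma expected_profit_buys (c p r : R) : speculator_buys mu p r ->
  expected_profit P V mu c p r = (p + r * mu - c)%:E.
Proof.
rewrite /expected_profit /creator_profit => ->.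
have -> : (fun w => p + r * V w - c) = (fun w => (p - c) + r * V w).
  by apply: funext => w; ring.
by rewrite expectation_affine // EV -EFinM -EFinD; congr _%:E; ring.
Qed.

Definition primary_revenue (p : R) (w : T) : R := p * ((p <= V w)%R : bool)%:R.

Lemma measurable_primary_revenue (p : R) :
  measurable_fun setT (primary_revenue p).
Proof.
apply: measurable_funM => //.
apply: (measurableT_comp (measurable_bool_natr R)).
exact: measurable_fun_ler.
Qed.

Lemma primary_revenue_ge0 (p : R) (w : T) : 0 <= p -> 0 <= primary_revenue p w.
Proof. by move=> p_ge0; rewrite /primary_revenue mulr_ge0. Qed.

Lemma primary_revenue_le (p : R) (w : T) : primary_revenue p w <= V w.
Proof. by rewrite /primary_revenue; have [|] := leP p (V w); rewrite ?mulr1 ?mulr0. Qed.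

Lemma expected_profit_not_buys (c p r : R) : 0 <= p -> ~~ speculator_buys mu p r ->
  (expected_profit P V mu c p r <= (mu - c)%:E)%E.
Proof.
move=> p_ge0; rewrite /expected_profit /creator_profit => /negbTE ->.
have revL : primary_revenue p \in Lfun P 1.
  apply: le_Lfun1 V_Lfun1; first exact: measurable_primary_revenue.
  move=> w; rewrite !ger0_norm ?primary_revenue_ge0 //.
  exact: primary_revenue_le.
rewrite -[fun w => _]/(primary_revenue p \- cst c)%R.
rewrite expectationB ?Lfun_cst // expectation_cst EFinB leeB // -EV.
apply: expectation_le => //; first exact: measurable_primary_revenue.
- by move=> w; exact: primary_revenue_ge0.
- by apply: aeW => w; exact: primary_revenue_le.
Qed.

Lemma expected_profit_le (c p r : R) : 0 <= p ->
  (expected_profit P V mu c p r <= (mu - c)%:E)%E.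
Proof.
move=> p_ge0; have [buys|] := boolP (speculator_buys mu p r).
  by rewrite expected_profit_buys // lee_fin; move: buys; rewrite /speculator_buys; lra.
exact: expected_profit_not_buys.
Qed.

Lemma expected_profit_mint_at_resale_value (c r : R) :
  expected_profit P V mu c (mu * (1 - r)) r = (mu - c)%:E.
Proof.
rewrite expected_profit_buys; first by congr _%:E; ring.
by rewrite /speculator_buys mulrC subrr.
Qed.

End creator_profit.

Theorem theorem1 (d : measure_display) (T : measurableType d) (R : realType)
  (P : probability T R) (V : T -> R) (mu c : R)
  (mV : measurable_fun setT V) (V_ge0 : forall w, 0 <= V w)
  (Emu : 'E_P[V]%E = mu%:E) (c_ge0 : 0 <= c)
  (r0 p0 : R) (r0_ge0 : 0 <= r0) (r0_le1 : r0 <= 1) (p0_ge0 : 0 <= p0)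
  (p0_def : p0 = mu * (1 - r0)) :
  (forall p r : R, 0 <= p -> 0 <= r -> r <= 1 ->
     (expected_profit P V mu c p r <= expected_profit P V mu c p0 r0)%E) /\
  expected_profit P V mu c p0 r0 = (mu - c)%:E.
Proof.
have optimal_value : expected_profit P V mu c p0 r0 = (mu - c)%:E.
  by rewrite p0_def expected_profit_mint_at_resale_value.
split=> // p r p_ge0 _ _; rewrite optimal_value.
exact: expected_profit_le.
Qed.
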